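(* Let $n\ge 2$, $d\ge 1$, and let $\lambda_-<\lambda_+$ be in $(-1,1)$. There is no set of Gram-representable conditions that is necessary and sufficient for $\mathcal{W}_{\lambda_-,\lambda_+}$-interpolability of a set of pairs of variables $\{(\mathbf{x}^k,\mathbf{y}^k)\}_{k\in I}$, $\mathbf{x}^k,\mathbf{y}^k\in\mathbb{R}^{nd}$.
   Context: $\mathcal{W}_{\lambda_-,\lambda_+}$ denotes the set of symmetric matrices $W\in\mathbb{R}^{n\times n}$ whose largest eigenvalue is $\lambda_1(W)=1$ with eigenvector $\mathbf{1}/\sqrt{n}$ and whose other eigenvalues satisfy $\lambda_-\le\lambda_n(W)\le\dots\le\lambda_2(W)\le\lambda_+$. A vector $\mathbf{x}\in\mathbb{R}^{nd}$ stacks the local vectors $x_1,\dots,x_n\in\mathbb{R}^d$ of $n$ agents. For a finite index set $I$, a set of pairs $\{(\mathbf{x}^k,\mathbf{y}^k)\}_{k\in I}$ is $\mathcal{W}_{\lambda_-,\lambda_+}$-interpolable if there exists $W\in\mathcal{W}_{\lambda_-,\lambda_+}$ with $\mathbf{y}^k=(W\otimes I_d)\mathbf{x}^k$ for all $k\in I$. A condition is Gram-representable if it can be expressed as a finite set of linear constraints or linear matrix inequalities in the entries of the Gram matrix of the vectors $x_i^k,y_i^k\in\mathbb{R}^d$ ($i=1,\dots,n$, $k\in I$), i.e. in their pairwise scalar products (the dimension $d$ being left free). *)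

From HB Require Import structures.
From mathcomp Require Import all_boot all_order all_algebra.
From mathcomp Require Import reals.
Set Implicit Arguments. Unset Strict Implicit. Unset Printing Implicit Defensive.
Import Order.TTheory GRing.Theory Num.Theory.
Local Open Scope ring_scope.

(* W belongs to W_{lm,lp}: symmetric, with eigenvalue 1 of eigenvector the
   all-ones vector (proportional to 1/sqrt n), and the remaining eigenvalues
   (the spectrum, with multiplicity, given by the characteristic polynomial)
   mu_1..mu_{n-1} satisfying lm <= mu_i <= lp and mu_i <= 1 (so that 1 is the
   largest eigenvalue lambda_1). *)
Definition in_Wset (R : realType) (n : nat) (lm lp : R) (W : 'M[R]_n) : Prop :=
  W^T = W /\
  W *m (const_mx 1 : 'cV[R]_n) = const_mx 1 /\
  exists mu : 'I_n.-1 -> R,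
    char_poly W = ('X - 1%:P) * \prod_(i < n.-1) ('X - (mu i)%:P) /\
    (forall i, lm <= mu i <= lp) /\ (forall i, mu i <= 1).

(* A stacked vector x in R^{nd} is represented by the n x d matrix whose
   i-th row is the local vector x_i in R^d; then (W (x) I_d) x = W *m X. *)
Definition interpolable (R : realType) (n d m : nat) (lm lp : R)
  (X Y : 'I_m -> 'M[R]_(n, d)) : Prop :=
  exists W : 'M[R]_n, in_Wset lm lp W /\ forall k, Y k = W *m X k.

(* Index set of the vectors x_i^k, y_i^k : (is_y, agent i, index k). *)
Definition gidx (n m : nat) : finType := ((bool * 'I_n) * 'I_m)%type.

Definition gvec (R : realType) (n d m : nat) (X Y : 'I_m -> 'M[R]_(n, d))
  (j : gidx n m) : 'rV[R]_d :=
  row j.1.2 (if j.1.1 then Y j.2 else X j.2).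

Definition gram (R : realType) (n d m : nat) (X Y : 'I_m -> 'M[R]_(n, d))
  (a b : gidx n m) : R :=
  (gvec X Y a *m (gvec X Y b)^T) 0 0.

Definition psd (R : realType) (s : nat) (M : 'M[R]_s) : Prop :=
  M^T = M /\ forall v : 'rV[R]_s, 0 <= (v *m M *m v^T) 0 0.

Inductive gram_atom (R : realType) (J : finType) : Type :=
| GLinEq of R & (J -> J -> R)
| GLinGe of R & (J -> J -> R)
| GLMI (s : nat) of 'M[R]_s & (J -> J -> 'M[R]_s).

Definition lin_form (R : realType) (J : finType) (c0 : R) (c : J -> J -> R)
  (G : J -> J -> R) : R :=
  c0 + \sum_(a : J) \sum_(b : J) c a b * G a b.

Definition atom_holds (R : realType) (J : finType) (G : J -> J -> R)
  (t : gram_atom R J) : Prop :=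
  match t with
  | GLinEq c0 c => lin_form c0 c G = 0
  | GLinGe c0 c => 0 <= lin_form c0 c G
  | @GLMI _ _ s A0 A => psd (A0 + \sum_(a : J) \sum_(b : J) G a b *: A a b)
  end.

Definition gram_cond_holds (R : realType) (J : finType) (C : seq (gram_atom R J))
  (G : J -> J -> R) : Prop :=
  foldr (fun t P => atom_holds G t /\ P) True C.

(* Each Gram-representable constraint (linear equality, linear inequality,
   LMI) is convex in the Gram matrix, so the set of Gram matrices satisfying
   any such condition is convex; W-interpolability is not.  For a nonzero v
   orthogonal to the all-ones vector, the pairs (v, lm v) and (v, lp v) are
   interpolated by W = mu I + (1 - mu)/n 11^T with mu = lm, resp. lp.  With
   a^2 + b^2 = 1, the two-dimensional pair (v (a, b), (a lm v, b lp v)) has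
   Gram matrix a^2 G_lm + b^2 G_lp, yet interpolating it would force
   W v = lm v = lp v. *)

From HB Require Import structures.
From mathcomp Require Import all_boot all_order all_algebra.
From mathcomp Require Import reals ring.
Set Implicit Arguments. Unset Strict Implicit. Unset Printing Implicit Defensive.
Import Order.TTheory GRing.Theory Num.Theory.
Local Open Scope ring_scope.

Lemma char_poly_conj (R : comNzRingType) n (P Q A : 'M[R]_n) :
  P *m Q = 1%:M -> char_poly (P *m A *m Q) = char_poly A.
Proof.
move=> PQ; pose Pp := map_mx polyC P; pose Qp := map_mx polyC Q.
have PQp : Pp *m Qp = 1%:M by rewrite -map_mxM PQ map_scalar_mx.
rewrite /char_poly.
have -> : char_poly_mx (P *m A *m Q) = Pp *m char_poly_mx A *m Qp.
  rewrite /char_poly_mx !map_mxM mulmxBr mulmxBl mul_mx_scalar -scalemxAl PQp.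
  by rewrite -mul_mx_scalar mul1mx.
by rewrite !det_mulmx mulrAC -det_mulmx PQp det1 mul1r.
Qed.

Section ConvexGramConditions.
Variables (R : realType) (J : finType) (s t : R) (G G1 G2 : J -> J -> R).
Hypotheses (s_ge0 : 0 <= s) (t_ge0 : 0 <= t) (st1 : s + t = 1).
Hypothesis G_conv : forall a b, G a b = s * G1 a b + t * G2 a b.

Lemma lin_form_conv c0 c :
  lin_form c0 c G = s * lin_form c0 c G1 + t * lin_form c0 c G2.
Proof.
rewrite /lin_form !mulrDr -addrACA -mulrDl st1 mul1r; congr (_ + _).
rewrite !mulr_sumr -big_split; apply: eq_bigr => a _.
rewrite !mulr_sumr -big_split; apply: eq_bigr => b _.
by rewrite G_conv /=; ring.
Qed.

Lemma psd_conv k (M1 M2 : 'M[R]_k) : psd M1 -> psd M2 -> psd (s *: M1 + t *: M2).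
Proof.
move=> [M1_sym M1_ge0] [M2_sym M2_ge0]; rewrite /psd; split.
  by rewrite linearD /= !linearZ /= M1_sym M2_sym.
move=> v; rewrite mulmxDr mulmxDl -!scalemxAr -!scalemxAl.
by rewrite mxE; apply: addr_ge0; rewrite mxE; apply: mulr_ge0.
Qed.

Lemma atom_holds_conv a : atom_holds G1 a -> atom_holds G2 a -> atom_holds G a.
Proof.
case: a => [c0 c|c0 c|k A0 A] /=; rewrite ?lin_form_conv.
- by move=> -> ->; rewrite !mulr0 addr0.
- by move=> h1 h2; apply: addr_ge0; apply: mulr_ge0.
have -> : A0 + \sum_a \sum_b G a b *: A a b =
    s *: (A0 + \sum_a \sum_b G1 a b *: A a b) +
    t *: (A0 + \sum_a \sum_b G2 a b *: A a b).
  rewrite !scalerDr addrACA -scalerDl st1 scale1r; congr (_ + _).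
  rewrite !scaler_sumr -big_split; apply: eq_bigr => a _.
  rewrite !scaler_sumr -big_split; apply: eq_bigr => b _.
  by rewrite G_conv !scalerA scalerDl.
exact: psd_conv.
Qed.

Lemma gram_cond_holds_conv C :
  gram_cond_holds C G1 -> gram_cond_holds C G2 -> gram_cond_holds C G.
Proof.
elim: C => //= a C IH [a1 C1] [a2 C2].
by split; [exact: atom_holds_conv | exact: IH].
Qed.

End ConvexGramConditions.

Section GramOfConcatenation.
Variables (R : realType) (n m : nat).

Lemma gram_row_mx d1 d2 (X1 Y1 : 'I_m -> 'M[R]_(n, d1))
    (X2 Y2 : 'I_m -> 'M[R]_(n, d2)) a b :
  gram (fun k => row_mx (X1 k) (X2 k)) (fun k => row_mx (Y1 k) (Y2 k)) a b =
  gram X1 Y1 a b + gram X2 Y2 a b.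
Proof.
have gvec_row_mx c :
    gvec (fun k => row_mx (X1 k) (X2 k)) (fun k => row_mx (Y1 k) (Y2 k)) c =
    row_mx (gvec X1 Y1 c) (gvec X2 Y2 c).
  by rewrite /gvec; case: c.1.1; rewrite row_row_mx.
by rewrite /gram !gvec_row_mx tr_row_mx mul_row_col mxE.
Qed.

Lemma gram_scale d (X Y : 'I_m -> 'M[R]_(n, d)) (s : R) a b :
  gram (fun k => s *: X k) (fun k => s *: Y k) a b = s ^+ 2 * gram X Y a b.
Proof.
have gvec_scale c : gvec (fun k => s *: X k) (fun k => s *: Y k) c = s *: gvec X Y c.
  by rewrite /gvec; case: c.1.1; rewrite linearZ.
by rewrite /gram !gvec_scale linearZ /= -scalemxAl -scalemxAr !mxE mulrA expr2.
Qed.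

End GramOfConcatenation.

Section ConsensusMatrix.
Variables (R : realType) (k : nat) (mu : R).
Local Notation n := k.+1.
Local Notation ones := (const_mx 1 : 'cV[R]_n).
Local Notation e0 := (delta_mx 0 0 : 'cV[R]_n).

Definition consensus_mx : 'M[R]_n :=
  mu%:M + ((1 - mu) / n%:R) *: (ones *m ones^T).

Lemma tr_consensus_mx : consensus_mx^T = consensus_mx.
Proof. by rewrite linearD /= tr_scalar_mx linearZ /= trmx_mul trmxK. Qed.

Lemma ones_dot_ones : ones^T *m ones = n%:R%:M.
Proof.
apply/matrixP => i j; rewrite !ord1 !mxE (eq_bigr (fun _ => 1)) ?sumr_const ?card_ord //.
by move=> l _; rewrite !mxE mulr1.
Qed.

Lemma ones_dot_e0 : ones^T *m e0 = 1%:M.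
Proof.
apply/matrixP => i j; rewrite !ord1 !mxE (bigD1 0) //= big1 => [|l /negbTE l0].
  by rewrite !mxE !eqxx mulr1 addr0.
by rewrite !mxE l0 mulr0.
Qed.

Lemma consensus_mx_ones : consensus_mx *m ones = ones.
Proof.
rewrite mulmxDl mul_scalar_mx -scalemxAl -mulmxA ones_dot_ones mul_mx_scalar.
by rewrite scalerA divfK ?pnatr_eq0 // -scalerDl addrC subrK scale1r.
Qed.

Lemma consensus_mx_orth d (X : 'M[R]_(n, d)) :
  ones^T *m X = 0 -> consensus_mx *m X = mu *: X.
Proof.
move=> X_orth; rewrite mulmxDl mul_scalar_mx -scalemxAl -mulmxA X_orth.
by rewrite mulmx0 scaler0 addr0.
Qed.

(* Conjugating by [I + e0 w] with [w := ones^T - e0^T] turns the rank-one part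
   [ones ones^T] into a matrix supported on the first column, so the conjugate
   is triangular with diagonal [1, mu, ..., mu]. *)
Lemma char_poly_consensus_mx :
  char_poly consensus_mx = ('X - 1%:P) * \prod_(i < k) ('X - mu%:P).
Proof.
pose c := (1 - mu) / n%:R; pose w := ones^T - e0^T.
pose P := 1%:M - e0 *m w; pose Q := 1%:M + e0 *m w.
have e0_dot_e0 : e0^T *m e0 = 1%:M.
  by rewrite trmx_delta mul_delta_mx; apply/matrixP => i j; rewrite !ord1 !mxE.
have e0_dot_ones : e0^T *m ones = 1%:M.
  by rewrite -[ones]trmxK -trmx_mul ones_dot_e0 tr_scalar_mx.
have w_e0 : w *m e0 = 0 by rewrite mulmxBl ones_dot_e0 e0_dot_e0 subrr.
have w_ones : w *m ones = k%:R%:M.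
  by rewrite mulmxBl ones_dot_ones e0_dot_ones -raddfB /= -natr1 addrK.
have ew_ew : e0 *m w *m (e0 *m w) = 0.
  by rewrite mulmxA -(mulmxA e0) w_e0 mulmx0 mul0mx.
have PQ : P *m Q = 1%:M.
  by rewrite mulmxDr !mulmxBl !mulmx1 !mul1mx ew_ew subr0 subrK.
have QP : Q *m P = 1%:M.
  by rewrite mulmxBr !mulmxDl !mulmx1 !mul1mx ew_ew addr0 addrK.
have Q_ones : Q *m ones = ones + k%:R *: e0.
  by rewrite mulmxDl mul1mx -mulmxA w_ones mul_mx_scalar.
have ones_P : ones^T *m P = e0^T.
  by rewrite mulmxBr mulmx1 mulmxA ones_dot_e0 mul1mx opprB addrC subrK.
pose D := Q *m consensus_mx *m P.
have D_E : D = mu%:M + c *: ((ones + k%:R *: e0) *m e0^T).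
  rewrite /D /consensus_mx (mulmxDr Q) (mulmxDl _ _ P) mul_mx_scalar.
  rewrite -scalemxAl QP scalemx1.
  by rewrite -scalemxAr -scalemxAl (mulmxA Q) -(mulmxA (Q *m ones)) Q_ones ones_P.
have D_ij i j :
    D i j = mu *+ (i == j) + c * ((1 + k%:R * (i == 0)%:R) *+ (j == 0)).
  by rewrite D_E !mxE big_ord1 !mxE !eqxx !andbT mulr_natr.
have D_trig : is_trig_mx D.
  apply/is_trig_mxP => i j lt_ij; rewrite D_ij -!val_eqE /= (ltn_eqF lt_ij).
  by rewrite (gtn_eqF (leq_ltn_trans (leq0n i) lt_ij)) mulr0n mulr0 addr0.
have -> : consensus_mx = P *m D *m Q.
  by rewrite !mulmxA PQ mul1mx -mulmxA PQ mulmx1.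
rewrite char_poly_conj // char_poly_trig // big_ord_recl D_ij !eqxx !mulr1n.
rewrite mulr1 nat1r /c divfK ?pnatr_eq0 // [mu + _]addrC subrK; congr (_ * _).
by apply: eq_bigr => i _; rewrite D_ij eqxx -val_eqE /= mulr1n mulr0n mulr0 addr0.
Qed.

Lemma consensus_mx_in_Wset (lm lp : R) :
  lm <= mu <= lp -> mu <= 1 -> in_Wset lm lp consensus_mx.
Proof.
move=> mu_in mu_le1; split; first exact: tr_consensus_mx.
split; first exact: consensus_mx_ones.
by exists (fun _ => mu); rewrite char_poly_consensus_mx.
Qed.

End ConsensusMatrix.

Lemma interpolable_scale_orth (R : realType) k d m (lm lp mu : R)
    (X : 'I_m -> 'M[R]_(k.+1, d)) :
  lm <= mu <= lp -> mu <= 1 ->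
  (forall i, (const_mx 1 : 'cV_k.+1)^T *m X i = 0) ->
  interpolable lm lp X (fun i => mu *: X i).
Proof.
move=> mu_in mu_le1 X_orth; exists (consensus_mx k mu).
by split=> [|i]; [exact: consensus_mx_in_Wset | rewrite consensus_mx_orth].
Qed.

Definition dipole_vec (R : realType) k : 'cV[R]_k.+2 := delta_mx 0 0 - delta_mx 1 0.

Lemma ones_dot_dipole_vec (R : realType) k :
  (const_mx 1 : 'cV_k.+2)^T *m dipole_vec R k = 0.
Proof.
apply/matrixP => i j; rewrite !ord1 !mxE big_ord_recl big_ord_recl big1 => [|l _].
  by rewrite !mxE /= !mul1r subr0 add0r addr0 subrr.
by rewrite !mxE /= subrr mulr0.
Qed.

Lemma dipole_vec_neq0 (R : realType) k : dipole_vec R k != 0.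
Proof.
apply/negP => /eqP/matrixP/(_ 0 0); rewrite !mxE /= subr0 => /eqP.
by rewrite oner_eq0.
Qed.

Lemma interpolable_split_eigen_eq (R : realType) n m (lm lp a b mu1 mu2 : R)
    (v : 'cV[R]_n) :
  a != 0 -> b != 0 -> v != 0 ->
  interpolable lm lp (fun _ : 'I_m.+1 => row_mx (a *: v) (b *: v))
                     (fun _ => row_mx (a *: (mu1 *: v)) (b *: (mu2 *: v))) ->
  mu1 = mu2.
Proof.
move=> a_neq0 b_neq0 v_neq0 [W [_ /(_ 0)]]; rewrite (@mul_mx_row _ _ _ 1 1 W).
move=> /(@eq_row_mx _ _ 1 1)[]; rewrite -!scalemxAr.
move=> /(scalerI a_neq0) <- /(scalerI b_neq0)/eqP.
rewrite -subr_eq0 -scalerBl scaler_eq0 subr_eq0 (negbTE v_neq0) orbF eq_sym.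
by move/eqP.
Qed.

Theorem theorem1 (R : realType) (n : nat) (lm lp : R) :
  (2 <= n)%N -> -1 < lm -> lm < lp -> lp < 1 ->
  exists m : nat,
    ~ exists C : seq (gram_atom R (gidx n m)),
        forall (d : nat), (1 <= d)%N ->
        forall X Y : 'I_m -> 'M[R]_(n, d),
          gram_cond_holds C (gram X Y) <-> interpolable lm lp X Y.
Proof.
move=> n_ge2 _ lm_lt_lp lp_lt1; exists 1%N.
case: n n_ge2 => [|[|k]] // _ [C C_iff].
pose v := dipole_vec R k; pose X : 'I_1 -> 'M_(k.+2, 1) := fun=> v.
have C_eigen mu : lm <= mu <= lp -> gram_cond_holds C (gram X (fun=> mu *: v)).
  move=> mu_in; apply/(C_iff 1%N isT X)/interpolable_scale_orth => // [|i].
    by rewrite (le_trans _ (ltW lp_lt1)) //; case/andP: mu_in.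
  exact: ones_dot_dipole_vec.
pose a : R := 3 / 5; pose b : R := 4 / 5.
have C_mix : gram_cond_holds C (gram (fun=> row_mx (a *: v) (b *: v))
                                 (fun=> row_mx (a *: (lm *: v)) (b *: (lp *: v)))).
  apply: (gram_cond_holds_conv (sqr_ge0 a) (sqr_ge0 b) _ _
           (C_eigen lm _) (C_eigen lp _)).
  - by rewrite /a /b; field.
  - by move=> p q; rewrite gram_row_mx !gram_scale.
  - by rewrite lexx ltW.
  - by rewrite lexx ltW.
have a_neq0 : a != 0 by rewrite mulf_neq0 ?invr_eq0 ?pnatr_eq0.
have b_neq0 : b != 0 by rewrite mulf_neq0 ?invr_eq0 ?pnatr_eq0.
have /(C_iff 2%N isT) := C_mix.
move=> /(interpolable_split_eigen_eq a_neq0 b_neq0 (dipole_vec_neq0 R k)) lm_eq_lp.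
by rewrite lm_eq_lp ltxx in lm_lt_lp.
Qed.
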